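(* Let $\alpha\in\mathbb{R}$ and $0<\beta\le\frac14$. Suppose $F_2(\alpha,\beta)$ has Property A, $t\in\mathfrak{T}_1(F_1(\alpha,\beta)-F_1(\alpha,\beta))$, and $\Theta_\alpha(t)\ge0$ on $\mathbb{T}^2$. Then $t\in\mathfrak{U}_1(F_1(\alpha,\beta))$.
   Context: $\mathbb{T}=\mathbb{R}/\mathbb{Z}$, $e_j(x)=e^{2\pi i jx}$. $\mathfrak{T}_d$ is the algebra of trigonometric polynomials on $\mathbb{T}^d$; $\mathfrak{T}_d^+=\{t\in\mathfrak{T}_d:t\ge0\}$; for $F\subseteq\mathbb{Z}^d$, $\mathfrak{T}_d(F)=\{t\in\mathfrak{T}_d:\mathrm{freq}(t)\subseteq F\}$, $\mathfrak{T}_d^+(F)=\mathfrak{T}_d^+\cap\mathfrak{T}_d(F)$, $\mathfrak{S}_d(F)=\{|p|^2:p\in\mathfrak{T}_d(F)\}$, and $\mathfrak{U}_d(F)=\mathfrak{T}_d\cap\overline{\mathfrak{S}_d(F)}$ (closure in the sup norm on $C(\mathbb{T}^d)$). $F\subseteq\mathbb{Z}^d$ has Property A if $\mathfrak{U}_d(F)=\mathfrak{T}_d^+(F-F)$. For $\alpha\in\mathbb{R}$, $\theta_\alpha(j)$ is the smallest integer minimizing $|\theta_\alpha(j)-j\alpha|$, and $\Theta_\alpha(t)(x,y)=\sum_j\widehat t(j)e_j(x)e_{\theta_\alpha(j)}(y)$ for $t\in\mathfrak{T}_1$. $F_1(\alpha,\beta)=\{j\in\mathbb{Z}:|\theta_\alpha(j)-j\alpha|<\beta\}$,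 $F_2(\alpha,\beta)=\{(j,k)\in\mathbb{Z}^2:|k-j\alpha|<\beta\}$. *)

From Stdlib Require Import Reals ZArith List.
Import ListNotations.
Open Scope R_scope.

Record C := mkC { Re : R; Im : R }.
Definition C0 : C := mkC 0 0.
Definition Cadd (z w : C) : C := mkC (Re z + Re w) (Im z + Im w).
Definition Csub (z w : C) : C := mkC (Re z - Re w) (Im z - Im w).
Definition Cmul (z w : C) : C :=
  mkC (Re z * Re w - Im z * Im w) (Re z * Im w + Im z * Re w).
Definition Cnorm2 (z : C) : R := Re z * Re z + Im z * Im z.
Definition Cmod (z : C) : R := sqrt (Cnorm2 z).
Definition Csum (l : list C) : C := fold_right Cadd C0 l.

(** e_j(x) = exp(2 pi i j x), as a function on R (1-periodic, i.e. on T = R/Z). *)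
Definition ech (j : Z) (x : R) : C :=
  mkC (cos (2 * PI * (IZR j * x))) (sin (2 * PI * (IZR j * x))).

Definition ech2 (jk : Z * Z) (xy : R * R) : C :=
  Cmul (ech (fst jk) (fst xy)) (ech (snd jk) (snd xy)).

(** A trigonometric polynomial with frequencies in K: a coefficient function
    together with a duplicate-free list containing its support. *)
Record tpoly (K : Type) := TP { coef : K -> C; supp : list K }.
Arguments TP {K} _ _.
Arguments coef {K} _ _.
Arguments supp {K} _.

Definition tp_wf {K : Type} (t : tpoly K) : Prop :=
  NoDup (supp t) /\ forall k, coef t k <> C0 -> In k (supp t).

Definition teval {K X : Type} (chi : K -> X -> C) (t : tpoly K) (x : X) : C :=
  Csum (map (fun k => Cmul (coef t k) (chi k x)) (supp t)).

Definition in_T {K : Type} (F : K -> Prop) (t : tpoly K) : Prop :=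
  tp_wf t /\ forall k, coef t k <> C0 -> F k.

Definition tnonneg {K X : Type} (chi : K -> X -> C) (t : tpoly K) : Prop :=
  forall x, Im (teval chi t x) = 0 /\ 0 <= Re (teval chi t x).

Definition in_Tplus {K X : Type} (chi : K -> X -> C) (F : K -> Prop)
  (t : tpoly K) : Prop := in_T F t /\ tnonneg chi t.

(** U_d(F) = T_d ∩ closure (sup norm) of S_d(F) = { |p|^2 : p in T_d(F) }. *)
Definition in_U {K X : Type} (chi : K -> X -> C) (F : K -> Prop)
  (t : tpoly K) : Prop :=
  tp_wf t /\
  forall eps : R, 0 < eps ->
    exists p : tpoly K, in_T F p /\
      forall x, Cmod (Csub (teval chi t x) (mkC (Cnorm2 (teval chi p x)) 0)) <= eps.

Definition diffZ (F : Z -> Prop) (k : Z) : Prop :=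
  exists a b, F a /\ F b /\ k = (a - b)%Z.
Definition diffZ2 (F : Z * Z -> Prop) (k : Z * Z) : Prop :=
  exists a b, F a /\ F b /\ k = (fst a - fst b, snd a - snd b)%Z.

Definition PropertyA2 (F : Z * Z -> Prop) : Prop :=
  forall t : tpoly (Z * Z), in_U ech2 F t <-> in_Tplus ech2 (diffZ2 F) t.

(** floor via Stdlib's [up] (x < up x <= x + 1). *)
Definition Zfloor (x : R) : Z := (up x - 1)%Z.

(** theta_alpha(j): the smallest integer minimizing |m - j alpha|; the
    minimizers are among floor(j alpha), floor(j alpha)+1, and on a tie the
    smaller one, floor(j alpha), is chosen. *)
Definition theta (alpha : R) (j : Z) : Z :=
  let y := IZR j * alpha in
  let f := Zfloor y in
  if Rlt_dec (IZR (f + 1) - y) (y - IZR f) then (f + 1)%Z else f.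

Definition F1 (alpha beta : R) (j : Z) : Prop :=
  Rabs (IZR (theta alpha j) - IZR j * alpha) < beta.
Definition F2 (alpha beta : R) (jk : Z * Z) : Prop :=
  Rabs (IZR (snd jk) - IZR (fst jk) * alpha) < beta.

(** Theta_alpha(t)(x,y) = sum_j hat t(j) e_j(x) e_{theta(j)}(y). *)
Definition Theta (alpha : R) (t : tpoly Z) : tpoly (Z * Z) :=
  TP (fun jk => if Z.eq_dec (snd jk) (theta alpha (fst jk))
                then coef t (fst jk) else C0)
     (map (fun j => (j, theta alpha j)) (supp t)).

From Pilot Require Import Defs.
From Stdlib Require Import Reals ZArith List.
From Stdlib Require Import Lra Lia Classical FinFun.
Open Scope R_scope.

(* The map Theta_alpha lifts a one-variable trigonometric polynomial t to the
   two-variable polynomial whose frequency j becomes (j, theta(j)).  Two facts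
   about the nearest-integer map theta drive the argument:
   - theta(j) is a nearest integer to j*alpha, so F_2 projects into F_1;
   - for beta <= 1/4, theta is additive on F_1, so (a-b, theta(a-b)) is the
     difference (a, theta a) - (b, theta b) of two points of F_2.
   By the second fact Theta(t) lies in T_2^+(F_2 - F_2); Property A then
   approximates it uniformly by |p|^2 with freq(p) in F_2.  Restricting to the
   line y = 0 turns Theta(t) back into t and p into a polynomial q with
   frequencies in the projection of F_2, hence in F_1 by the first fact, so
   |q|^2 approximates t uniformly and t lies in U_1(F_1). *)

Lemma Ceq (z w : Defs.C) : Re z = Re w -> Im z = Im w -> z = w.
Proof. destruct z, w; simpl; intros; subst; reflexivity. Qed.

Lemma Csum_zero {A : Type} (f : A -> Defs.C) (l : list A) :
  (forall k, In k l -> f k = C0) -> Csum (map f l) = C0.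
Proof.
  induction l as [|a l IH]; simpl; intros H; [reflexivity|].
  rewrite H, IH by auto. apply Ceq; simpl; ring.
Qed.

Lemma Csum_add {A : Type} (f g : A -> Defs.C) (l : list A) :
  Csum (map (fun j => Cadd (f j) (g j)) l) = Cadd (Csum (map f l)) (Csum (map g l)).
Proof.
  induction l as [|a l IH]; simpl; [apply Ceq; simpl; ring|].
  rewrite IH. apply Ceq; simpl; ring.
Qed.

Lemma Csum_indicator (L : list Z) (a : Z) (v : Z -> Defs.C) : NoDup L -> In a L ->
  Csum (map (fun j => if Z.eq_dec a j then v j else C0) L) = v a.
Proof.
  induction L as [|b L IH]; simpl; intros Hnd Hin; [contradiction|].
  inversion Hnd as [|? ? HbL HndL]; subst.
  destruct (Z.eq_dec a b) as [->|Hab].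
  - rewrite Csum_zero; [apply Ceq; simpl; ring|].
    intros k Hk. destruct (Z.eq_dec b k) as [->|]; [contradiction | reflexivity].
  - destruct Hin as [->|Hin]; [congruence|].
    rewrite IH by assumption. apply Ceq; simpl; ring.
Qed.

Lemma Csum_group_fst (L : list Z) (l : list (Z * Z)) (c : Z * Z -> Defs.C) (e : Z -> Defs.C) :
  NoDup L -> (forall k, In k l -> In (fst k) L) ->
  Csum (map (fun j =>
     Cmul (Csum (map (fun k => if Z.eq_dec (fst k) j then c k else C0) l)) (e j)) L)
  = Csum (map (fun k => Cmul (c k) (e (fst k))) l).
Proof.
  intros Hnd. induction l as [|k l IH]; simpl; intros Hin.
  - apply Csum_zero. intros; apply Ceq; simpl; ring.
  - rewrite <- IH by auto.
    transitivity (Csum (map (fun j =>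
      Cadd (if Z.eq_dec (fst k) j then Cmul (c k) (e j) else C0)
           (Cmul (Csum (map (fun k' => if Z.eq_dec (fst k') j then c k' else C0) l)) (e j)))
      L)).
    + f_equal. apply map_ext. intros j.
      destruct (Z.eq_dec (fst k) j); apply Ceq; simpl; ring.
    + rewrite Csum_add. f_equal.
      apply (Csum_indicator L (fst k) (fun j => Cmul (c k) (e j))); auto.
Qed.

Lemma ech2_axis (jk : Z * Z) (x : R) : ech2 jk (x, 0) = ech (fst jk) x.
Proof.
  unfold ech2, ech; simpl. rewrite !Rmult_0_r, cos_0, sin_0.
  apply Ceq; simpl; ring.
Qed.

Lemma theta_nearest (alpha : R) (j m : Z) :
  Rabs (IZR (theta alpha j) - IZR j * alpha) <= Rabs (IZR m - IZR j * alpha).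
Proof.
  unfold theta; cbv zeta. set (y := IZR j * alpha).
  destruct (archimed y) as [Hup1 Hup2].
  assert (Hf1 : IZR (Defs.Zfloor y) <= y) by (unfold Defs.Zfloor; rewrite minus_IZR; simpl; lra).
  assert (Hf2 : y < IZR (Defs.Zfloor y) + 1) by (unfold Defs.Zfloor; rewrite minus_IZR; simpl; lra).
  set (f := Defs.Zfloor y) in *.
  assert (Hm : IZR m <= IZR f \/ IZR f + 1 <= IZR m).
  { destruct (Z.le_gt_cases m f) as [H|H].
    - left; apply IZR_le; lia.
    - right; rewrite <- plus_IZR; apply IZR_le; lia. }
  unfold f in *; destruct (Rlt_dec _ _); rewrite ?plus_IZR in *;
    unfold Rabs; repeat destruct Rcase_abs; lra.
Qed.

Lemma F2_fst_F1 (alpha beta : R) (jk : Z * Z) :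
  F2 alpha beta jk -> F1 alpha beta (fst jk).
Proof.
  unfold F1, F2; intros H.
  pose proof (theta_nearest alpha (fst jk) (snd jk)). lra.
Qed.

(* For beta <= 1/4, theta is additive on F_1: both theta(a - b) and
   theta(a) - theta(b) lie within 1/2 of (a - b) * alpha, so they coincide. *)
Lemma theta_sub (alpha beta : R) (a b : Z) : beta <= 1 / 4 ->
  F1 alpha beta a -> F1 alpha beta b ->
  theta alpha (a - b) = (theta alpha a - theta alpha b)%Z.
Proof.
  unfold F1; intros hb Ha Hb.
  pose proof (theta_nearest alpha (a - b) (theta alpha a - theta alpha b)) as Hmin.
  rewrite !minus_IZR in Hmin.
  apply Rabs_def2 in Ha; apply Rabs_def2 in Hb.
  assert (Hdiff : Rabs (IZR (theta alpha a) - IZR (theta alpha b)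
                        - (IZR a - IZR b) * alpha) < 1 / 2)
    by (apply Rabs_def1; lra).
  assert (Htheta : Rabs (IZR (theta alpha (a - b)) - (IZR a - IZR b) * alpha) < 1 / 2)
    by lra.
  apply Rabs_def2 in Hdiff; apply Rabs_def2 in Htheta.
  set (d := (theta alpha (a - b) - (theta alpha a - theta alpha b))%Z).
  assert (Hd1 : IZR d < IZR 1) by (unfold d; rewrite !minus_IZR; simpl; lra).
  assert (Hd2 : IZR (-1) < IZR d) by (unfold d; rewrite !minus_IZR; simpl; lra).
  apply lt_IZR in Hd1; apply lt_IZR in Hd2. unfold d in *; lia.
Qed.

Definition restrict_axis (p : tpoly (Z * Z)) : tpoly Z :=
  TP (fun j => Csum (map (fun k => if Z.eq_dec (fst k) j then coef p k else C0) (supp p)))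
     (nodup Z.eq_dec (map fst (supp p))).

Lemma restrict_axis_eval (p : tpoly (Z * Z)) (x : R) :
  teval ech (restrict_axis p) x = teval ech2 p (x, 0).
Proof.
  unfold teval, restrict_axis; simpl.
  rewrite (Csum_group_fst _ _ (coef p) (fun j => ech j x)).
  - f_equal. apply map_ext. intros k. rewrite ech2_axis. reflexivity.
  - apply NoDup_nodup.
  - intros k Hk. apply nodup_In, in_map; assumption.
Qed.

Lemma restrict_axis_coef (p : tpoly (Z * Z)) (j : Z) :
  coef (restrict_axis p) j <> C0 ->
  exists k, In k (supp p) /\ fst k = j /\ coef p k <> C0.
Proof.
  intros Hne. apply NNPP. intros Hno. apply Hne. simpl. apply Csum_zero.
  intros k Hk. destruct (Z.eq_dec (fst k) j) as [Hj|]; [|reflexivity].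
  apply NNPP. intros Hc. apply Hno. exists k; auto.
Qed.

Lemma restrict_axis_in_T (F : Z * Z -> Prop) (G : Z -> Prop) (p : tpoly (Z * Z)) :
  (forall jk, F jk -> G (fst jk)) -> in_T F p -> in_T G (restrict_axis p).
Proof.
  intros HFG [_ HF]. split; [split|].
  - apply NoDup_nodup.
  - intros j Hj. destruct (restrict_axis_coef p j Hj) as (k & Hk & <- & _).
    apply nodup_In, in_map; assumption.
  - intros j Hj. destruct (restrict_axis_coef p j Hj) as (k & _ & <- & Hc).
    apply HFG, HF, Hc.
Qed.

Lemma in_U_restrict_axis (F : Z * Z -> Prop) (G : Z -> Prop)
  (P : tpoly (Z * Z)) (t : tpoly Z) :
  (forall jk, F jk -> G (fst jk)) -> tp_wf t ->
  (forall x, teval ech2 P (x, 0) = teval ech t x) ->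
  in_U ech2 F P -> in_U ech G t.
Proof.
  intros HFG Hwf Haxis [_ HU]. split; [exact Hwf|].
  intros eps Heps. destruct (HU eps Heps) as (p & Hp & Happrox).
  exists (restrict_axis p). split; [exact (restrict_axis_in_T F G p HFG Hp)|].
  intros x. rewrite restrict_axis_eval, <- Haxis. apply Happrox.
Qed.

Lemma Theta_axis (alpha : R) (t : tpoly Z) (x : R) :
  teval ech2 (Theta alpha t) (x, 0) = teval ech t x.
Proof.
  unfold teval, Theta; simpl. rewrite map_map. f_equal. apply map_ext. intros j.
  simpl. destruct (Z.eq_dec (theta alpha j) (theta alpha j)) as [_|]; [|contradiction].
  rewrite ech2_axis. reflexivity.
Qed.

Lemma Theta_in_T (alpha beta : R) (t : tpoly Z) : beta <= 1 / 4 ->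
  in_T (diffZ (F1 alpha beta)) t -> in_T (diffZ2 (F2 alpha beta)) (Theta alpha t).
Proof.
  intros hb [[Hnd Hsupp] Hfr]. split; [split|].
  - simpl. apply Injective_map_NoDup; [|assumption].
    intros x y H; injection H; auto.
  - intros [j k]; simpl. destruct (Z.eq_dec k (theta alpha j)) as [->|]; [|contradiction].
    intros H. apply in_map_iff. exists j; auto.
  - intros [j k]; simpl. destruct (Z.eq_dec k (theta alpha j)) as [->|]; [|contradiction].
    intros H. destruct (Hfr j H) as (a & b & Ha & Hb & ->).
    exists (a, theta alpha a), (b, theta alpha b); simpl.
    rewrite (theta_sub alpha beta a b hb Ha Hb).
    unfold F2; simpl. repeat split; assumption.
Qed.

Theorem corollary1 (alpha beta : R) (hb0 : 0 < beta) (hb1 : beta <= 1 / 4)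
  (hA : PropertyA2 (F2 alpha beta))
  (t : tpoly Z) (ht : in_T (diffZ (F1 alpha beta)) t)
  (hpos : tnonneg ech2 (Theta alpha t)) :
  in_U ech (F1 alpha beta) t.
Proof.
  assert (Hplus : in_Tplus ech2 (diffZ2 (F2 alpha beta)) (Theta alpha t))
    by exact (conj (Theta_in_T alpha beta t hb1 ht) hpos).
  apply hA in Hplus.
  apply (in_U_restrict_axis (F2 alpha beta) (F1 alpha beta) (Theta alpha t) t).
  - apply F2_fst_F1.
  - exact (proj1 ht).
  - apply Theta_axis.
  - exact Hplus.
Qed.
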